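(* Let $0<\gamma_\ell<\gamma_{\ell+1}<\infty$ and define $$b_\ell=\frac{\log(\log_2(1+\gamma_{\ell+1}))-\log(\log_2(1+\gamma_\ell))}{\log\gamma_{\ell+1}-\log\gamma_\ell},\qquad a_\ell=e^{\log(\log_2(1+\gamma_{\ell+1}))-b_\ell\log\gamma_{\ell+1}},$$ so that $\varphi_\ell(\gamma)=a_\ell\gamma^{b_\ell}$ is the unique function of this form with $\varphi_\ell(\gamma_\ell)=\log_2(1+\gamma_\ell)$ and $\varphi_\ell(\gamma_{\ell+1})=\log_2(1+\gamma_{\ell+1})$. Then $$\varphi_\ell(\gamma)\ge\log_2(1+\gamma)\ \text{for }\gamma\in[0,\gamma_\ell],\qquad \varphi_\ell(\gamma)\le\log_2(1+\gamma)\ \text{for }\gamma\in[\gamma_\ell,\gamma_{\ell+1}],\qquad \varphi_\ell(\gamma)>\log_2(1+\gamma)\ \text{for }\gamma\in(\gamma_{\ell+1},\infty).$$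
   Context: $\log$ denotes the natural logarithm. *)

From HB Require Import structures.
From mathcomp Require Import all_boot all_order all_algebra.
From mathcomp Require Import all_classical all_reals all_analysis.
Set Implicit Arguments. Unset Strict Implicit. Unset Printing Implicit Defensive.
Import Order.TTheory GRing.Theory Num.Theory.
Local Open Scope ring_scope.

Definition log2 {R : realType} (x : R) : R := ln x / ln 2.

Definition b_coef {R : realType} (gl gl1 : R) : R :=
  (ln (log2 (1 + gl1)) - ln (log2 (1 + gl))) / (ln gl1 - ln gl).

Definition a_coef {R : realType} (gl gl1 : R) : R :=
  expR (ln (log2 (1 + gl1)) - b_coef gl gl1 * ln gl1).

(* phi_l(g) = a_l * g ^ b_l  (powR: 0 `^ b = 0 for b <> 0) *)
Definition phi {R : realType} (gl gl1 g : R) : R :=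
  a_coef gl gl1 * g `^ b_coef gl gl1.

From HB Require Import structures.
From mathcomp Require Import all_boot all_order all_algebra.
From mathcomp Require Import all_classical all_reals all_analysis.
From mathcomp Require Import ring lra.
Import Order.TTheory GRing.Theory Num.Theory.
Local Open Scope ring_scope.

(* In log-log coordinates phi_l is the chord of t |-> ln (log2 (1 + e^t))
   through the two interpolation points, so the claim follows from strict
   concavity of this curve.  Its slope at g = e^t is the elasticity
   g / ((1 + g) ln (1 + g)) of ln (1 + g), which decreases in g.  Hence the
   gap G(g) = ln (ln (1 + g)) - b ln g between curve and chord of slope b
   increases up to the point xi where the elasticity equals b and decreases
   after it; G takes equal values at gamma_l and gamma_(l+1), and by Rolle xi
   lies between them.  Finally phi_l(g) = log2 (1 + g) exp (G(gamma_(l+1)) - G(g)). *)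

Lemma derive_gt0_lt {R : realType} (f f' : R -> R) (a b : R) :
  (forall z, a <= z <= b -> is_derive z 1 f (f' z)) ->
  (forall z, a < z < b -> 0 < f' z) -> a < b -> f a < f b.
Proof.
move=> f_deriv f'_gt0 ab.
have f_derivable z : a <= z <= b -> derivable f z 1 by move/f_deriv => [].
apply: (@gtr0_derive1_lt_cc _ f a b); rewrite ?in_itv /= ?lexx ?ltW //.
- by move=> z; rewrite in_itv /= => /andP[az zb]; apply: f_derivable; rewrite !ltW.
- move=> z; rewrite in_itv /= derive1E => /andP[az zb].
  have [_ ->] : is_derive z 1 f (f' z) by apply: f_deriv; rewrite !ltW.
  by apply: f'_gt0; rewrite az zb.
- apply: derivable_within_continuous => z; rewrite in_itv /=.
  exact: f_derivable.
Qed.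

Lemma derive_lt0_gt {R : realType} (f f' : R -> R) (a b : R) :
  (forall z, a <= z <= b -> is_derive z 1 f (f' z)) ->
  (forall z, a < z < b -> f' z < 0) -> a < b -> f b < f a.
Proof.
move=> f_deriv f'_lt0 ab; rewrite -ltrN2.
apply: (@derive_gt0_lt _ (fun z => - f z) (fun z => - f' z)) => //.
- by move=> z /f_deriv; exact: is_deriveN.
- by move=> z /f'_lt0; rewrite oppr_gt0.
Qed.

Section ln1D.
Context {R : realType}.

Lemma is_derive_1D (x : R) : is_derive x 1 (fun z => 1 + z) 1.
Proof.
by have := is_deriveD (is_derive_cst (1 : R) x 1) (is_derive_id x 1); rewrite add0r.
Qed.

Lemma is_derive_ln1D (x : R) :
  -1 < x -> is_derive x 1 (fun z => ln (1 + z)) (1 + x)^-1.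
Proof.
move=> x_gtN1.
have d1D := is_derive_1D x.
have dln : is_derive (1 + x) 1 (@ln R) (1 + x)^-1 by apply: is_derive1_ln; lra.
by have := is_derive1_comp dln d1D; rewrite mulr1.
Qed.

Lemma lt_ln1Dx (x : R) : 0 < x -> ln (1 + x) < x.
Proof. by move=> x_gt0; rewrite -ltr_expR lnK ?expR_gt1Dx ?gt_eqF // posrE; lra. Qed.

Lemma ln1D_gt0 (x : R) : 0 < x -> 0 < ln (1 + x).
Proof. by move=> x_gt0; apply: ln_gt0; lra. Qed.

Lemma is_derive_ln1D_ratio (x : R) : 0 < x ->
  is_derive x 1 (fun z => (1 + z) * ln (1 + z) / z) ((x - ln (1 + x)) / x ^+ 2).
Proof.
move=> x_gt0.
have d1D := is_derive_1D x.
have dln1D : is_derive x 1 (fun z => ln (1 + z)) (1 + x)^-1 by apply: is_derive_ln1D; lra.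
have dinv := @is_deriveV R id x 1 1 (lt0r_neq0 x_gt0) (is_derive_id x 1).
apply: is_derive_eq (is_deriveM (is_deriveM d1D dln1D) dinv) _.
have : 0 < ln (1 + x) by exact: ln1D_gt0.
rewrite /GRing.scale /= -[(_ * _) x]/((1 + x) * ln (1 + x)) => ?.
by field; lra.
Qed.

Definition ln1D_elasticity (x : R) := x / ((1 + x) * ln (1 + x)).

Lemma ln1D_elasticity_gt0 (x : R) : 0 < x -> 0 < ln1D_elasticity x.
Proof.
by move=> x_gt0; rewrite divr_gt0 // mulr_gt0 ?ln1D_gt0 //; lra.
Qed.

Lemma ln1D_elasticity_decr (x y : R) :
  0 < x -> x < y -> ln1D_elasticity y < ln1D_elasticity x.
Proof.
move=> x_gt0 xy; have y_gt0 := lt_trans x_gt0 xy.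
rewrite -[ln1D_elasticity y]invrK -[ln1D_elasticity x]invrK.
rewrite ltf_pV2 ?posrE ?invr_gt0 ?ln1D_elasticity_gt0 // !invf_div.
apply: (@derive_gt0_lt _ (fun z => (1 + z) * ln (1 + z) / z)
  (fun z => (z - ln (1 + z)) / z ^+ 2)) => //.
  by move=> z /andP[xz _]; apply: is_derive_ln1D_ratio; exact: lt_le_trans xz.
move=> z /andP[xz _]; have z_gt0 := lt_trans x_gt0 xz.
by rewrite divr_gt0 ?exprn_gt0 // subr_gt0 lt_ln1Dx.
Qed.

End ln1D.

Section loglog_gap.
Context {R : realType}.

Definition loglog_gap (b x : R) := ln (ln (1 + x)) - b * ln x.

Lemma is_derive_loglog_gap (b : R) {x : R} : 0 < x ->
  is_derive x 1 (loglog_gap b) ((ln1D_elasticity x - b) / x).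
Proof.
move=> x_gt0; have l_gt0 : 0 < ln (1 + x) by exact: ln1D_gt0.
have dln1D : is_derive x 1 (fun z => ln (1 + z)) (1 + x)^-1 by apply: is_derive_ln1D; lra.
have dlnln := @is_derive1_comp R (@ln R) _ x _ _ (is_derive1_ln l_gt0) dln1D.
apply: is_derive_eq (is_deriveB dlnln (is_deriveZ b (is_derive1_ln x_gt0))) _.
by rewrite /ln1D_elasticity /GRing.scale /=; field; lra.
Qed.

Lemma loglog_gap_critical {b x1 x2 : R} : 0 < x1 -> x1 < x2 ->
  loglog_gap b x1 = loglog_gap b x2 ->
  exists2 xi, x1 < xi < x2 & ln1D_elasticity xi = b.
Proof.
move=> x1_gt0 x1_x2 gap_eq.
have [xi] : exists2 xi, xi \in `]x1, x2[ & is_derive xi 1 (loglog_gap b) 0.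
  apply: Rolle => //.
    move=> z; rewrite in_itv /= => /andP[x1_z _].
    by have [] := is_derive_loglog_gap b (lt_trans x1_gt0 x1_z).
  apply: derivable_within_continuous => z; rewrite in_itv /= => /andP[x1_z _].
  by have [] := is_derive_loglog_gap b (lt_le_trans x1_gt0 x1_z).
rewrite in_itv /= => xi_in [_ gap'_xi]; exists xi => //.
have xi_gt0 : 0 < xi by case/andP: xi_in => x1_xi _; exact: lt_trans x1_xi.
have [_] := is_derive_loglog_gap b xi_gt0; rewrite gap'_xi => /esym/eqP.
by rewrite mulf_eq0 invr_eq0 (gt_eqF xi_gt0) orbF subr_eq0 => /eqP.
Qed.

Section unimodal.
Context {b xi : R}.
Hypotheses (xi_gt0 : 0 < xi) (elasticity_xi : ln1D_elasticity xi = b).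

Lemma loglog_gap_lt_incr {x y : R} :
  0 < x -> x < y -> y <= xi -> loglog_gap b x < loglog_gap b y.
Proof.
move=> x_gt0 x_y y_xi.
apply: (@derive_gt0_lt _ _ (fun z => (ln1D_elasticity z - b) / z)) => // z.
  by case/andP=> x_z _; apply: is_derive_loglog_gap; exact: lt_le_trans x_z.
case/andP=> x_z z_y; have z_gt0 := lt_trans x_gt0 x_z.
rewrite divr_gt0 // subr_gt0 -elasticity_xi ln1D_elasticity_decr //.
exact: lt_le_trans y_xi.
Qed.

Lemma loglog_gap_lt_decr {x y : R} :
  xi <= x -> x < y -> loglog_gap b y < loglog_gap b x.
Proof.
move=> xi_x x_y.
apply: (@derive_lt0_gt _ _ (fun z => (ln1D_elasticity z - b) / z)) => // z.
  case/andP=> x_z _; apply: is_derive_loglog_gap.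
  exact: lt_le_trans xi_gt0 (le_trans xi_x x_z).
case/andP=> x_z _; have xi_z := le_lt_trans xi_x x_z.
rewrite pmulr_llt0 ?invr_gt0 ?(lt_trans xi_gt0) // subr_lt0 -elasticity_xi.
exact: ln1D_elasticity_decr.
Qed.

Lemma loglog_gap_le_incr {x y : R} :
  0 < x -> x <= y -> y <= xi -> loglog_gap b x <= loglog_gap b y.
Proof.
move=> x_gt0; rewrite le_eqVlt => /predU1P[-> // | x_y] y_xi.
exact/ltW/loglog_gap_lt_incr.
Qed.

Lemma loglog_gap_le_decr {x y : R} :
  xi <= x -> x <= y -> loglog_gap b y <= loglog_gap b x.
Proof.
move=> xi_x; rewrite le_eqVlt => /predU1P[-> // | x_y].
exact/ltW/loglog_gap_lt_decr.
Qed.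

End unimodal.
End loglog_gap.

Section chord.
Context {R : realType}.

Lemma log2_1D_gt0 (x : R) : 0 < x -> 0 < log2 (1 + x).
Proof. by move=> x_gt0; rewrite divr_gt0 ?ln1D_gt0 ?ln_gt0 ?ltr1n. Qed.

Lemma ln_log2_1D (x : R) : 0 < x ->
  ln (log2 (1 + x)) = ln (ln (1 + x)) - ln (ln 2).
Proof. by move=> x_gt0; rewrite ln_div // posrE ?ln1D_gt0 ?ln_gt0 ?ltr1n. Qed.

Lemma loglog_gap_b_coef {gl gl1 : R} : 0 < gl -> gl < gl1 ->
  loglog_gap (b_coef gl gl1) gl = loglog_gap (b_coef gl gl1) gl1.
Proof.
move=> gl_gt0 gl_gl1; have gl1_gt0 := lt_trans gl_gt0 gl_gl1.
have : 0 < ln gl1 - ln gl by rewrite subr_gt0 ltr_ln ?posrE.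
by rewrite /loglog_gap /b_coef !ln_log2_1D // => ?; field; lra.
Qed.

Lemma phiE (gl gl1 g : R) : 0 < gl1 -> 0 < g ->
  phi gl gl1 g = log2 (1 + g) *
    expR (loglog_gap (b_coef gl gl1) gl1 - loglog_gap (b_coef gl gl1) g).
Proof.
move=> gl1_gt0 g_gt0.
rewrite /phi /a_coef /powR gt_eqF // -[log2 _ in RHS]lnK ?posrE ?log2_1D_gt0 //.
by rewrite -!expRD; congr expR; rewrite !ln_log2_1D // /loglog_gap; ring.
Qed.

Lemma phi_ge0 (gl gl1 g : R) : 0 <= phi gl gl1 g.
Proof. by rewrite mulr_ge0 ?expR_ge0 ?powR_ge0. Qed.

Section phi_vs_log2.
Variables (gl gl1 g : R).
Hypotheses (gl1_gt0 : 0 < gl1) (g_gt0 : 0 < g).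
Local Notation G := (loglog_gap (b_coef gl gl1)).

Lemma log2_le_phi : (log2 (1 + g) <= phi gl gl1 g) = (G g <= G gl1).
Proof.
by rewrite phiE // ler_pMr ?log2_1D_gt0 // leNgt expR_lt1 -leNgt subr_ge0.
Qed.

Lemma phi_le_log2 : (phi gl gl1 g <= log2 (1 + g)) = (G gl1 <= G g).
Proof. by rewrite phiE // ger_pMr ?log2_1D_gt0 // expR_le1 subr_le0. Qed.

Lemma log2_lt_phi : (log2 (1 + g) < phi gl gl1 g) = (G g < G gl1).
Proof. by rewrite phiE // ltr_pMr ?log2_1D_gt0 // expR_gt1 subr_gt0. Qed.

End phi_vs_log2.
End chord.

Theorem proposition2 (R : realType) (gl gl1 : R) :
  0 < gl -> gl < gl1 ->
  (forall g : R, 0 <= g <= gl -> phi gl gl1 g >= log2 (1 + g)) /\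
  (forall g : R, gl <= g <= gl1 -> phi gl gl1 g <= log2 (1 + g)) /\
  (forall g : R, gl1 < g -> phi gl gl1 g > log2 (1 + g)).
Proof.
move=> gl_gt0 gl_gl1; have gl1_gt0 := lt_trans gl_gt0 gl_gl1.
have gap_eq := loglog_gap_b_coef gl_gt0 gl_gl1.
have [xi /andP[gl_xi xi_gl1] elasticity_xi] :=
  loglog_gap_critical gl_gt0 gl_gl1 gap_eq.
have xi_gt0 := lt_trans gl_gt0 gl_xi.
split; [|split] => g.
- case/andP; rewrite le_eqVlt => /predU1P[<- _ | g_gt0 g_gl].
    by rewrite addr0 /log2 ln1 mul0r phi_ge0.
  rewrite log2_le_phi // -gap_eq.
  exact: (loglog_gap_le_incr elasticity_xi g_gt0 g_gl (ltW gl_xi)).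
- case/andP=> gl_g g_gl1; have g_gt0 := lt_le_trans gl_gt0 gl_g.
  rewrite phi_le_log2 //; have [g_xi | xi_g] := lerP g xi.
    by rewrite -gap_eq; exact: (loglog_gap_le_incr elasticity_xi gl_gt0 gl_g g_xi).
  exact: (loglog_gap_le_decr xi_gt0 elasticity_xi (ltW xi_g) g_gl1).
- move=> gl1_g; rewrite log2_lt_phi ?(lt_trans gl1_gt0 gl1_g) //.
  exact: (loglog_gap_lt_decr xi_gt0 elasticity_xi (ltW xi_gl1) gl1_g).
Qed.
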